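(* Let $L$ be a pretransitive logic and $h,k<\omega$, and suppose $L[h]$ is $k$-tabular. Then for each $i\le h$ there is a $k$-formula $B_{i,k}$ such that, for every point $x$ of the $k$-canonical frame of $L$, $B_{i,k}\in x$ iff the depth of $x$ is at most $i$; and for any such choice of the $B_{i,k}$ and all $k$-formulas $\varphi$, $$L[h+1]\vdash\varphi\quad\text{iff}\quad L\vdash\bigwedge_{i\le h}\Big(\Box^*(\Box^*\varphi\to B_{i,k})\to B_{i,k}\Big).$$
   Context: Logics are normal $n$-modal logics; a $k$-formula uses only $p_j$, $j<k$. $L$ is $k$-tabular if there are finitely many $k$-formulas up to $L$-equivalence. $\Diamond^0\varphi=\varphi$, $\Diamond^{i+1}\varphi=\Diamond^i(\bigvee_{j<n}\Diamond_j\varphi)$, $\Diamond^{\le m}\varphi=\bigvee_{i\le m}\Diamond^i\varphi$. $L$ is pretransitive if $L\vdash\Diamond^{m+1}p\to\Diamond^{\le m}p$ for some $m$; for the least such $m$, $\Diamond^*=\Diamond^{\le m}$, $\Box^*=\neg\Diamond^*\neg$. $B_0=\bot$, $B_{i+1}=p_{i+1}\to\Box^*(\Diamond^*p_{i+1}\vee B_i)$; $L[h]=L+B_h$. The $k$-canonical frame of a consistent $L$ has points the maximal $L$-consistent sets of $k$-formulas, $xR_iy$ iff $\Diamond_i\psi\in x$ for all $k$-formulas $\psi\in y$; $R=\bigcup R_i$, $R^*$ its reflexive transitive closure. Clusters are classes of $R^*\cap(R^* )^{-1}$, ordered by $C\le D$ iff $xR^*y$ for some $x\in C,y\in D$; the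 height of a frame is the maximal size of a chain of clusters; the depth of $x$ is the height of the restriction of the frame to $R^*(x)$. (If $L$ is inconsistent, the statement is read with the canonical frame empty.) *)

From Stdlib Require Import List.
From mathcomp Require Import all_boot.
Set Implicit Arguments.
Unset Strict Implicit.
Unset Printing Implicit Defensive.

Inductive form (n : nat) : Type :=
| Var : nat -> form n
| Bot : form n
| Imp : form n -> form n -> form n
| Box : 'I_n -> form n -> form n.
Arguments Bot {n}.

Section Connectives.
Variable n : nat.
Definition Neg (a : form n) : form n := Imp a Bot.
Definition Top : form n := Neg Bot.
Definition Or (a b : form n) : form n := Imp (Neg a) b.
Definition And (a b : form n) : form n := Neg (Imp a (Neg b)).
Definition Iff (a b : form n) : form n := And (Imp a b) (Imp b a).
Definition Dia (i : 'I_n) (a : form n) : form n := Neg (Box i (Neg a)).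
Definition bigOr (l : seq (form n)) : form n := foldr Or Bot l.
Definition bigAnd (l : seq (form n)) : form n := foldr And Top l.

Fixpoint subst (s : nat -> form n) (a : form n) : form n :=
  match a with
  | Var p => s p
  | Bot => Bot
  | Imp a b => Imp (subst s a) (subst s b)
  | Box i a => Box i (subst s a)
  end.

Fixpoint kform (k : nat) (a : form n) : bool :=
  match a with
  | Var p => p < k
  | Bot => true
  | Imp a b => kform k a && kform k b
  | Box _ a => kform k a
  end.

Fixpoint peval (f : form n -> bool) (a : form n) : bool :=
  match a with
  | Var _ => f a
  | Bot => false
  | Imp a b => peval f a ==> peval f b
  | Box _ _ => f a
  end.
(* substitution instances of classical tautologies *)
Definition tautology (a : form n) : Prop := forall f, peval f a = true.

Definition logic := form n -> Prop.

Definition normal (L : logic) : Prop :=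
  [/\ (forall a, tautology a -> L a),
      (forall (i : 'I_n) a b, L (Imp (Box i (Imp a b)) (Imp (Box i a) (Box i b)))),
      (forall a b, L (Imp a b) -> L a -> L b),
      (forall (i : 'I_n) a, L a -> L (Box i a))
    & (forall s a, L a -> L (subst s a))].

(* L + A : the least normal logic containing L and A *)
Definition ext (L : logic) (A : form n) : logic :=
  fun a => forall L' : logic, normal L' -> (forall b, L b -> L' b) -> L' A -> L' a.

Definition dia_any (a : form n) : form n := bigOr [seq Dia i a | i <- enum 'I_n].
Fixpoint dia_iter (i : nat) (a : form n) : form n :=
  match i with
  | 0 => a
  | i'.+1 => dia_iter i' (dia_any a)
  end.
Definition dia_le (m : nat) (a : form n) : form n :=
  bigOr [seq dia_iter i a | i <- iota 0 m.+1].

Definition pretrans_at (L : logic) (m : nat) : Prop :=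
  L (Imp (dia_iter m.+1 (Var n 0)) (dia_le m (Var n 0))).
Definition least_pretrans (L : logic) (m : nat) : Prop :=
  pretrans_at L m /\ forall m', m' < m -> ~ pretrans_at L m'.

Definition dia_star (m : nat) (a : form n) : form n := dia_le m a.
Definition box_star (m : nat) (a : form n) : form n := Neg (dia_star m (Neg a)).

Fixpoint Bform (m : nat) (i : nat) : form n :=
  match i with
  | 0 => Bot
  | i'.+1 => Imp (Var n i) (box_star m (Or (dia_star m (Var n i)) (Bform m i')))
  end.

Definition Lh (L : logic) (m h : nat) : logic := ext L (Bform m h).

Definition ktabular (L : logic) (k : nat) : Prop :=
  exists reps : seq (form n),
    all (kform k) reps /\
    forall a, kform k a -> exists2 b, List.In b reps & L (Iff a b).

Definition consistent (L : logic) (x : form n -> Prop) : Prop :=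
  forall l : seq (form n), (forall a, List.In a l -> x a) -> ~ L (Neg (bigAnd l)).

Definition kset (k : nat) (x : form n -> Prop) : Prop :=
  forall a, x a -> kform k a.

Definition cpoint (L : logic) (k : nat) (x : form n -> Prop) : Prop :=
  [/\ kset k x, consistent L x &
      forall y, kset k y -> consistent L y -> (forall a, x a -> y a) ->
                forall a, y a -> x a].

Definition Ri (L : logic) (k : nat) (i : 'I_n) (x y : form n -> Prop) : Prop :=
  cpoint L k x /\ cpoint L k y /\
  forall a, kform k a -> y a -> x (Dia i a).

Definition Rc (L : logic) (k : nat) (x y : form n -> Prop) : Prop :=
  exists i, Ri L k i x y.

Inductive Rstar (L : logic) (k : nat) : (form n -> Prop) -> (form n -> Prop) -> Prop :=
| Rstar_refl x : cpoint L k x -> Rstar L k x x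
| Rstar_step x y z : Rc L k x y -> Rstar L k y z -> Rstar L k x z.

(* depth of x is at most i: the restriction of the frame to R*(x) has no
   chain of i+1 clusters, i.e. no strictly increasing (in the cluster order)
   sequence y_0 < y_1 < ... < y_i of points of R*(x). *)
Definition depth_le (L : logic) (k : nat) (x : form n -> Prop) (i : nat) : Prop :=
  ~ exists y : nat -> (form n -> Prop),
      Rstar L k x (y 0) /\
      forall j, j < i ->
        Rstar L k (y j) (y j.+1) /\ ~ Rstar L k (y j.+1) (y j).
End Connectives.

From Stdlib Require Import Classical ClassicalEpsilon FunctionalExtensionality PropExtensionality.
From HB Require Import structures.
From mathcomp Require Import all_boot.
Set Implicit Arguments. Unset Strict Implicit. Unset Printing Implicit Defensive.

(* Everything happens in the k-canonical frame of L, through the truth lemma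
   for k-formulas. Pretransitivity makes R* the relation defined by the
   formulas Dia^*, so Box^* and Dia^* are interpreted along R*; the
   k-substitution instances of B_h then hold at x exactly when every point
   above x has depth at most h, hence x contains every k-theorem of L[h] iff
   its depth is at most h.

   Since L[h] is k-tabular, a point of depth at most h is determined by its
   truth values on the variables p_j (j < k) and on finitely many
   representatives of the k-formulas modulo L[h]. There are finitely many
   such profiles, and one k-formula (the diagram) describes them together
   with the accessibility relations between the corresponding points; it
   holds exactly at the points of depth at most h, and adding a disjunction
   of profiles defines depth at most i.

   For the reduction: if phi fails in L[h+1], it fails at a point of exact
   depth i+1 <= h+1, which refutes the i-th conjunct. Conversely, a point
   refuting the i-th conjunct sees a point u refuting B_i that is maximal
   among such points (obtained by running through an enumeration of all
   formulas); every point strictly above u satisfies B_i, so u has depth at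
   most i+1, validates Box^* phi, and therefore satisfies B_i after all. *)


Section FormCountable.
Variable n : nat.

Fixpoint form_tree (a : form n) : GenTree.tree nat :=
  match a with
  | Var p => GenTree.Node 0 [:: GenTree.Leaf p]
  | Bot => GenTree.Node 1 [::]
  | Imp a b => GenTree.Node 2 [:: form_tree a; form_tree b]
  | Box i a => GenTree.Node 3 [:: GenTree.Leaf (nat_of_ord i); form_tree a]
  end.

Fixpoint tree_form (t : GenTree.tree nat) : option (form n) :=
  match t with
  | GenTree.Node 0 [:: GenTree.Leaf p] => Some (Var n p)
  | GenTree.Node 1 [::] => Some Bot
  | GenTree.Node 2 [:: ta; tb] =>
      if (tree_form ta, tree_form tb) is (Some a, Some b) then Some (Imp a b) else None
  | GenTree.Node 3 [:: GenTree.Leaf i; ta] =>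
      if (insub i, tree_form ta) is (Some i', Some a) then Some (Box i' a) else None
  | _ => None
  end.

Lemma form_treeK : pcancel form_tree tree_form.
Proof. by elim=> [p| |a IHa b IHb|i a IHa] //=; rewrite ?IHa ?IHb ?valK. Qed.

End FormCountable.

HB.instance Definition _ (n : nat) := Countable.copy (form n) (pcan_type (@form_treeK n)).

Lemma InP (T : eqType) (c : T) (s : seq T) : reflect (List.In c s) (c \in s).
Proof.
elim: s => [|a s IH] /=; first by constructor.
rewrite in_cons; apply: (iffP orP) => [[/eqP->|/IH]|[->|/IH]]; by [left|right|left|right].
Qed.

Definition truthb (P : Prop) : bool := if excluded_middle_informative P then true else false.

Lemma truthbP (P : Prop) : reflect P (truthb P).
Proof. by rewrite /truthb; case: excluded_middle_informative => H; constructor. Qed.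

Section Tautologies.
Variable n : nat.
Implicit Types (a b : form n) (l : seq (form n)).

Lemma peval_bigAnd f l : peval f (bigAnd l) = all (peval f) l.
Proof. by elim: l => [|a l /= ->] //; case: (peval f a); case: all. Qed.

Lemma peval_bigOr f l : peval f (bigOr l) = has (peval f) l.
Proof. by elim: l => [|a l /= ->] //; case: (peval f a); case: has. Qed.

Lemma taut_bigAnd_const l b : (forall c, c \in l -> c = b) -> tautology (Imp b (bigAnd l)).
Proof. by move=> lb f /=; rewrite peval_bigAnd; apply/implyP => fb; apply/allP => c /lb ->. Qed.

End Tautologies.

Ltac taut_cases f :=
  rewrite /= ?peval_bigAnd ?peval_bigOr;
  repeat match goal with
  | |- context [all ?p ?a] => case: (all p a)
  | |- context [has ?p ?a] => case: (has p a)
  | |- context [peval f ?a] => case: (peval f a)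
  | |- context [f ?a] => case: (f a)
  end; try done.

Ltac taut := let f := fresh "f" in move=> f; taut_cases f.
Ltac taut_from H := let f := fresh "f" in move=> f; move: (H f); taut_cases f.

Section NormalLogic.
Variables (n : nat) (L : logic n).
Hypothesis normL : normal L.
Implicit Types (a b c : form n) (l : seq (form n)).

Lemma thm_taut a : tautology a -> L a.
Proof. by case: normL => H _ _ _ _; apply: H. Qed.

Lemma thm_K i a b : L (Imp (Box i (Imp a b)) (Imp (Box i a) (Box i b))).
Proof. by case: normL => _ H _ _ _; apply: H. Qed.

Lemma thm_mp a b : L (Imp a b) -> L a -> L b.
Proof. by case: normL => _ _ H _ _; apply: H. Qed.

Lemma thm_nec i a : L a -> L (Box i a).
Proof. by case: normL => _ _ _ H _; apply: H. Qed.

Lemma thm_subst s a : L a -> L (subst s a).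
Proof. by case: normL => _ _ _ _ H; apply: H. Qed.

Lemma thm_mp_taut a b : L a -> tautology (Imp a b) -> L b.
Proof. by move=> La /thm_taut/thm_mp; apply. Qed.

Lemma thm_mp2_taut a b c : L a -> L b -> tautology (Imp a (Imp b c)) -> L c.
Proof. by move=> La Lb /thm_taut/thm_mp/(_ La)/thm_mp; apply. Qed.

Lemma thm_trans a b c : L (Imp a b) -> L (Imp b c) -> L (Imp a c).
Proof. by move=> Lab Lbc; apply: (thm_mp2_taut Lab Lbc); taut. Qed.

Lemma thm_box_mono i a b : L (Imp a b) -> L (Imp (Box i a) (Box i b)).
Proof. by move=> Lab; apply: thm_mp (thm_K i a b) (thm_nec i Lab). Qed.

Lemma thm_dia_mono i a b : L (Imp a b) -> L (Imp (Dia i a) (Dia i b)).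
Proof.
move=> Lab; have Lba : L (Imp (Neg b) (Neg a)) by apply: (thm_mp_taut Lab); taut.
by apply: (thm_mp_taut (thm_box_mono i Lba)); taut.
Qed.

Lemma thm_box_bigAnd i l : L (Imp (bigAnd (map (Box i) l)) (Box i (bigAnd l))).
Proof.
elim: l => [|a l IH] /=.
  by apply: (thm_mp_taut (thm_nec i (thm_taut (a := Top n) _))); taut.
have Lpair : L (Imp (Box i a) (Imp (Box i (bigAnd l)) (Box i (And a (bigAnd l))))).
  apply: thm_trans (thm_box_mono i (_ : L (Imp a (Imp (bigAnd l) _)))) (thm_K _ _ _).
  by apply: thm_taut; taut.
by apply: (thm_mp2_taut IH Lpair); taut.
Qed.

Lemma thm_bigAnd_intro a l : (forall c, c \in l -> L (Imp a c)) -> L (Imp a (bigAnd l)).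
Proof.
elim: l => [|c l IH] Ll /=; first by apply: thm_taut; taut.
have Lc := Ll c (mem_head c l).
have Ls : L (Imp a (bigAnd l)) by apply: IH => d dl; apply: Ll; rewrite in_cons dl orbT.
by apply: (thm_mp2_taut Lc Ls); taut.
Qed.

Lemma thm_bigOr_map (I : eqType) (f g : I -> form n) (s : seq I) :
  (forall j, j \in s -> L (Imp (f j) (g j))) ->
  L (Imp (bigOr (map f s)) (bigOr (map g s))).
Proof.
elim: s => [|j s IH] fg /=; first by apply: thm_taut; taut.
have Lj := fg j (mem_head j s).
have Ls : L (Imp (bigOr (map f s)) (bigOr (map g s))).
  by apply: IH => j' js; apply: fg; rewrite in_cons js orbT.
by apply: (thm_mp2_taut Lj Ls); taut.
Qed.

Lemma thm_dia_iter_mono j a b : L (Imp a b) -> L (Imp (dia_iter j a) (dia_iter j b)).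
Proof.
elim: j a b => [|j IH] a b Lab //=; apply: IH.
by apply: thm_bigOr_map => i _; apply: thm_dia_mono.
Qed.

Lemma thm_neg_bigOr l : (forall c, c \in l -> L (Neg c)) -> L (Neg (bigOr l)).
Proof.
elim: l => [|c l IH] Ll /=; first by apply: thm_taut; taut.
have Lc := Ll c (mem_head c l).
have Ls : L (Neg (bigOr l)) by apply: IH => d dl; apply: Ll; rewrite in_cons dl orbT.
by apply: (thm_mp2_taut Lc Ls); taut.
Qed.

Lemma thm_neg_dia_iter j a : L (Neg a) -> L (Neg (dia_iter j a)).
Proof.
elim: j a => [|j IH] a La //=; apply/IH/thm_neg_bigOr => _ /mapP [i _ ->].
by apply: (thm_mp_taut (thm_nec i La)); taut.
Qed.

Lemma thm_box_star m a : L a -> L (box_star m a).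
Proof.
move=> La; have Lnn : L (Neg (Neg a)) by apply: (thm_mp_taut La); taut.
by apply: thm_neg_bigOr => _ /mapP [j _ ->]; apply: thm_neg_dia_iter.
Qed.

End NormalLogic.

Section Extension.
Variables (n : nat) (L : logic n) (A : form n).

Lemma ext_normal : normal (ext L A).
Proof.
split=> [a Ha L' nL' _ _|i a b L' nL' _ _|a b Hab Ha L' nL' LL' AL'|i a Ha L' nL' LL' AL'|
         s a Ha L' nL' LL' AL'].
- exact: thm_taut.
- exact: thm_K.
- exact: (thm_mp nL' (Hab L' nL' LL' AL') (Ha L' nL' LL' AL')).
- exact: (thm_nec nL' i (Ha L' nL' LL' AL')).
- exact: (thm_subst nL' s (Ha L' nL' LL' AL')).
Qed.

Lemma ext_incl a : L a -> ext L A a.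
Proof. by move=> La L' _ LL' _; apply: LL'. Qed.

Lemma ext_ax : ext L A A.
Proof. by move=> L' _ _. Qed.

End Extension.

Section Substitution.
Variable n : nat.
Implicit Types (a : form n) (l : seq (form n)) (s t : nat -> form n).

Lemma subst_Imp s a b : subst s (Imp a b) = Imp (subst s a) (subst s b).
Proof. by []. Qed.

Lemma subst_comp s t a : subst s (subst t a) = subst (fun j => subst s (t j)) a.
Proof. by elim: a => [p| |a IHa b IHb|i a IHa] //=; rewrite ?IHa ?IHb. Qed.

Lemma subst_bigOr s l : subst s (bigOr l) = bigOr (map (subst s) l).
Proof. by elim: l => [|a l /= ->]. Qed.

Lemma subst_dia_iter s j a : subst s (dia_iter j a) = dia_iter j (subst s a).
Proof.
elim: j a => [|j IH] a //=; rewrite IH /dia_any subst_bigOr -map_comp.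
by congr (dia_iter j (bigOr _)); apply: eq_map.
Qed.

Lemma subst_dia_star s m a : subst s (dia_star m a) = dia_star m (subst s a).
Proof.
rewrite /dia_star /dia_le subst_bigOr -map_comp.
by congr bigOr; apply: eq_map => j; apply: subst_dia_iter.
Qed.

Lemma subst_box_star s m a : subst s (box_star m a) = box_star m (subst s a).
Proof. exact: (congr1 (@Neg n) (subst_dia_star s m (Neg a))). Qed.

Lemma subst_Bform_succ s m i :
  subst s (Bform n m i.+1) =
  Imp (s i.+1) (box_star m (Or (dia_star m (s i.+1)) (subst s (Bform n m i)))).
Proof.
have -> : subst s (Bform n m i.+1) =
  Imp (s i.+1) (subst s (box_star m (Or (dia_star m (Var n i.+1)) (Bform n m i)))) by [].
rewrite subst_box_star.
by congr (Imp _ (box_star m (Or _ _))); exact: (subst_dia_star s m (Var n i.+1)).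
Qed.

Lemma subst_Bform_eq m i s t : (forall j, j <= i -> s j = t j) ->
  subst s (Bform n m i) = subst t (Bform n m i).
Proof.
elim: i => [|i IH] st //; rewrite !subst_Bform_succ st // IH // => j ji.
by apply: st; apply: ltnW.
Qed.

Variable k : nat.

Definition ksubst_id : nat -> form n := fun j => if j < k then Var n j else Bot.

Lemma subst_ksubst_id a : kform k a -> subst ksubst_id a = a.
Proof.
rewrite /ksubst_id; elim: a => [p| |a IHa b IHb|i a IHa] //=.
- by move=> ->.
- by case/andP => /IHa -> /IHb ->.
- by move/IHa ->.
Qed.

Definition ksubst (s : nat -> form n) := forall j, kform k (s j).

Lemma ksubst_ksubst_id : ksubst ksubst_id.
Proof. by move=> j; rewrite /ksubst_id; case: ifP. Qed.

Lemma kform_subst s a : ksubst s -> kform k (subst s a).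
Proof. by move=> ks; elim: a => [p| |a IHa b IHb|i a IHa] //=; rewrite ?IHa ?IHb. Qed.

Lemma kform_Neg a : kform k (Neg a) = kform k a.
Proof. by rewrite /= andbT. Qed.

Lemma kform_Dia i a : kform k (Dia i a) = kform k a.
Proof. by rewrite /= !andbT. Qed.

Lemma kform_Or a b : kform k (Or a b) = kform k a && kform k b.
Proof. by rewrite /= andbT. Qed.

Lemma kform_And a b : kform k (And a b) = kform k a && kform k b.
Proof. by rewrite /= !andbT. Qed.

Lemma kform_Imp a b : kform k (Imp a b) = kform k a && kform k b.
Proof. by []. Qed.

Lemma kform_bigAnd l : kform k (bigAnd l) = all (kform k) l.
Proof. by elim: l => [|a l /= ->]; rewrite ?andbT. Qed.

Lemma kform_bigOr l : kform k (bigOr l) = all (kform k) l.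
Proof. by elim: l => [|a l /= ->]; rewrite ?andbT. Qed.

Lemma kform_dia_iter j a : kform k a -> kform k (dia_iter j a).
Proof.
elim: j a => [|j IH] a ka //=; apply: IH; rewrite kform_bigOr.
by apply/allP => _ /mapP [i _ ->] /=; rewrite ka.
Qed.

Lemma kform_dia_star m a : kform k a -> kform k (dia_star m a).
Proof.
by move=> ka; rewrite kform_bigOr; apply/allP => _ /mapP [j _ ->]; apply: kform_dia_iter.
Qed.

Lemma kform_box_star m a : kform k a -> kform k (box_star m a).
Proof. by move=> ka; rewrite /box_star kform_Neg kform_dia_star ?kform_Neg. Qed.

End Substitution.

Lemma thm_pretrans n (L : logic n) m (psi : form n) :
  normal L -> pretrans_at L m -> L (Imp (dia_iter m.+1 psi) (dia_star m psi)).
Proof.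
move=> normL /(thm_subst normL (fun _ => psi)).
by rewrite subst_Imp subst_dia_iter subst_dia_star.
Qed.

Section Points.
Variables (n : nat) (L : logic n) (k : nat).
Hypothesis normL : normal L.
Implicit Types (a b c : form n) (l : seq (form n)) (G : form n -> Prop).

Lemma consistent_subl G l : consistent L G -> {in l, forall c, G c} -> ~ L (Neg (bigAnd l)).
Proof. by move=> cG lG; apply: cG => c /InP; apply: lG. Qed.

Lemma consistent_sub G G' : (forall a, G a -> G' a) -> consistent L G' -> consistent L G.
Proof. by move=> GG' cG' l lG; apply: cG' => c /lG /GG'. Qed.

Lemma consistentP G : (forall l, {in l, forall c, G c} -> ~ L (Neg (bigAnd l))) ->
  consistent L G.
Proof. by move=> cG l lG; apply: cG => c /InP; apply: lG. Qed.

Lemma inconsistentP G : ~ consistent L G ->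
  exists2 l, {in l, forall c, G c} & L (Neg (bigAnd l)).
Proof.
move=> nG; apply: NNPP => nl; apply: nG => l lG Ll.
by apply: nl; exists l => // c /InP; apply: lG.
Qed.

Lemma split_subl (G1 G2 : form n -> Prop) l : (forall c, c \in l -> G1 c \/ G2 c) ->
  exists l1 l2, [/\ {in l1, forall c, G1 c}, {in l2, forall c, G2 c} &
    tautology (Imp (And (bigAnd l1) (bigAnd l2)) (bigAnd l))].
Proof.
elim: l => [|c l IH] Gl; first by exists [::], [::]; split=> //; taut.
have [|l1 [l2 [G1l1 G2l2 Hl]]] := IH.
  by move=> d dl; apply: Gl; rewrite in_cons dl orbT.
case: (Gl c (mem_head c l)) => [G1c|G2c].
- exists (c :: l1), l2; split=> //; last by taut_from Hl.
  by move=> d /predU1P [->|/G1l1].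
- exists l1, (c :: l2); split=> //; last by taut_from Hl.
  by move=> d /predU1P [->|/G2l2].
Qed.

Lemma cpoint_eq (x y : form n -> Prop) : cpoint L k x -> cpoint L k y ->
  (forall a, y a -> x a) -> x = y.
Proof.
move=> [kx cx _] [_ _ maxy] yx; apply: functional_extensionality => a.
by apply: propositional_extensionality; split; [apply: maxy|apply: yx].
Qed.

Section Point.
Variable x : form n -> Prop.
Hypothesis Hx : cpoint L k x.

Lemma cpoint_kform a : x a -> kform k a.
Proof. by case: Hx => kx _ _; apply: kx. Qed.

Lemma cpoint_consistent l : {in l, forall c, x c} -> ~ L (Neg (bigAnd l)).
Proof. by case: Hx => _ cx _; apply: consistent_subl. Qed.

Lemma cpoint_refute b : kform k b -> ~ x b ->
  exists2 l, {in l, forall c, x c} & L (Imp (bigAnd l) (Neg b)).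
Proof.
move=> kb nxb; case: (classic (consistent L (fun c => x c \/ c = b))) => [cxb|].
  case: Hx => _ _ maxx; case: nxb; apply: (maxx _ _ cxb _ b (or_intror erefl)).
    by move=> c [/cpoint_kform|->].
  by move=> c xc; left.
case/inconsistentP=> l lxb Ll.
have [l1 [l2 [xl1 bl2 Hl]]] := split_subl lxb.
exists l1 => //; apply: (thm_mp_taut normL Ll) => f.
by move: (Hl f) (taut_bigAnd_const (b := b) bl2 f); taut_cases f.
Qed.

Lemma cpoint_closed l b : kform k b -> {in l, forall c, x c} -> L (Imp (bigAnd l) b) -> x b.
Proof.
move=> kb xl Llb; apply: NNPP => /(cpoint_refute kb) [l' xl' Ll'b].
apply: (@cpoint_consistent (l ++ l')).
  by move=> c; rewrite mem_cat => /orP [/xl|/xl'].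
apply: (thm_mp2_taut normL Llb Ll'b) => f /=.
by rewrite !peval_bigAnd all_cat; case: all; case: all; case: peval.
Qed.

Lemma cpoint_thm a : kform k a -> L a -> x a.
Proof.
by move=> ka La; apply: (@cpoint_closed [::]) => //; apply: (thm_mp_taut normL La); taut.
Qed.

Lemma cpoint_mp a b : x a -> kform k b -> L (Imp a b) -> x b.
Proof.
move=> xa kb Lab; apply: (@cpoint_closed [:: a]) => //; first by move=> c /predU1P [->|].
by apply: (thm_mp_taut normL Lab); taut.
Qed.

Lemma cpoint_mp2 a b c : x a -> x b -> kform k c -> L (Imp a (Imp b c)) -> x c.
Proof.
move=> xa xb kc Labc; apply: (@cpoint_closed [:: a; b]) => //.
  by move=> d; rewrite !inE => /orP [/eqP->|/eqP->].
by apply: (thm_mp_taut normL Labc); taut.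
Qed.

Lemma cpoint_Bot : ~ x Bot.
Proof.
move=> xB; apply: (@cpoint_consistent [:: Bot]); first by move=> c /predU1P [->|].
by apply: (thm_taut normL); taut.
Qed.

Lemma cpoint_contra a : x a -> x (Neg a) -> False.
Proof.
move=> xa xna; apply: cpoint_Bot; apply: (cpoint_mp2 xa xna) => //.
by apply: (thm_taut normL); taut.
Qed.

Lemma cpoint_em a : kform k a -> x a \/ x (Neg a).
Proof.
move=> ka; case: (classic (x a)) => [|/(cpoint_refute ka) [l xl Lla]]; first by left.
by right; apply: cpoint_closed xl Lla; rewrite kform_Neg.
Qed.

Lemma cpoint_Neg a : kform k a -> x (Neg a) <-> ~ x a.
Proof.
move=> ka; split=> [xna xa|nxa]; first exact: cpoint_contra xa xna.
by case: (cpoint_em ka).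
Qed.

Lemma cpoint_Imp a b : kform k a -> kform k b -> x (Imp a b) <-> (x a -> x b).
Proof.
move=> ka kb; split=> [xab xa|xab].
  by apply: cpoint_mp2 xab xa kb _; apply: (thm_taut normL); taut.
have kab : kform k (Imp a b) by rewrite /= ka kb.
case: (cpoint_em ka) => [/xab xb|xna].
  by apply: cpoint_mp xb kab _; apply: (thm_taut normL); taut.
by apply: cpoint_mp xna kab _; apply: (thm_taut normL); taut.
Qed.

Lemma cpoint_And a b : kform k a -> kform k b -> x (And a b) <-> x a /\ x b.
Proof.
move=> ka kb; split=> [xab|[xa xb]].
  by split; apply: cpoint_mp xab _ _ => //; apply: (thm_taut normL); taut.
by apply: cpoint_mp2 xa xb _ _; rewrite /= ?ka ?kb //; apply: (thm_taut normL); taut.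
Qed.

Lemma cpoint_Or a b : kform k a -> kform k b -> x (Or a b) <-> x a \/ x b.
Proof.
move=> ka kb; rewrite cpoint_Imp ?kform_Neg // cpoint_Neg //.
by split=> [xab|[xa|xb] //]; case: (classic (x a)) => [|/xab]; [left|right].
Qed.

Lemma cpoint_bigAnd l : all (kform k) l -> x (bigAnd l) <-> {in l, forall c, x c}.
Proof.
elim: l => [|a l IH] /=.
  by split=> // _; apply: cpoint_thm => //; apply: (thm_taut normL); taut.
case/andP=> ka kl; rewrite cpoint_And ?IH ?kform_bigAnd //.
split=> [[xa xl] c /predU1P [->|/xl]|xal] //.
by split=> [|c cl]; apply: xal; rewrite inE ?eqxx ?cl ?orbT.
Qed.

Lemma cpoint_bigOr l : all (kform k) l -> x (bigOr l) <-> exists2 c, c \in l & x c.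
Proof.
elim: l => [|a l IH] /=; first by split=> [/cpoint_Bot|[]].
case/andP=> ka kl; rewrite cpoint_Or ?IH ?kform_bigOr //.
split=> [[xa|[c cl xc]]|[c /predU1P [->|cl] xc]]; [exists a|exists c|left|right; exists c] => //.
- exact: mem_head.
- by rewrite in_cons cl orbT.
Qed.

End Point.
End Points.

Lemma subl_chain (T : eqType) (P : nat -> T -> Prop) (l : seq T) :
  (forall j j' c, j <= j' -> P j c -> P j' c) -> {in l, forall c, exists j, P j c} ->
  exists N, {in l, forall c, P N c}.
Proof.
move=> Pmono; elim: l => [|a l IH] Pl; first by exists 0.
have [|N PN] := IH; first by move=> c cl; apply: Pl; rewrite in_cons cl orbT.
have [j Pj] := Pl a (mem_head a l).
exists (maxn N j) => c /predU1P [->|/PN]; [apply: Pmono Pj|apply: Pmono];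
  by rewrite ?leq_maxl ?leq_maxr.
Qed.

Section Lindenbaum.
Variables (n : nat) (L : logic n) (k : nat) (G : form n -> Prop).
Hypotheses (kG : kset k G) (cG : consistent L G).

Definition enum_form (j : nat) : form n := odflt Bot (unpickle j).

Lemma enum_formK (a : form n) : enum_form (pickle a) = a.
Proof. by rewrite /enum_form pickleK. Qed.

Fixpoint lind_chain (j : nat) : form n -> Prop :=
  if j is j'.+1 then fun c => lind_chain j' c \/
      [/\ c = enum_form j', kform k c &
          consistent L (fun d => lind_chain j' d \/ d = enum_form j')]
  else G.

Lemma lind_chain_mono j j' c : j <= j' -> lind_chain j c -> lind_chain j' c.
Proof.
elim: j' => [|j' IH]; first by rewrite leqn0 => /eqP ->.
by rewrite leq_eqVlt => /predU1P [->|/IH jc /jc] //; left.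
Qed.

Lemma lind_chain_ok j : kset k (lind_chain j) /\ consistent L (lind_chain j).
Proof.
elim: j => [|j [kj cj]] //=.
case: (classic (kform k (enum_form j) /\
                consistent L (fun d => lind_chain j d \/ d = enum_form j))) => [[ke ce]|ne].
  split=> [c [/kj //|[-> //]]|l lc].
  by apply: ce => c /lc [|[->]]; [left|right].
split=> [c [/kj //|[e kc cc]]|l lc]; first by case: ne; subst c.
by apply: cj => c /lc [//|[e kc cc]]; case: ne; subst c.
Qed.

Lemma lindenbaum : exists2 x, cpoint L k x & forall a, G a -> x a.
Proof.
pose x c := exists j, lind_chain j c.
exists x => [|a Ga]; last by exists 0.
split=> [a [j /(proj1 (lind_chain_ok j))] //|l lx|y ky cy xy a ya].
  have [|N lN] := @subl_chain _ lind_chain l lind_chain_mono.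
    by move=> c /InP; apply: lx.
  by apply: (proj2 (lind_chain_ok N)) => c /InP; apply: lN.
exists (pickle a).+1; right; rewrite enum_formK; split=> //; first exact: ky.
by apply: consistent_sub cy => d [dj|->] //; apply: xy; exists (pickle a).
Qed.

End Lindenbaum.

Section Successors.
Variables (n : nat) (L : logic n) (k : nat).
Hypothesis normL : normal L.
Implicit Types (a b c : form n) (l : seq (form n)) (x y : form n -> Prop).

Lemma Ri_Dia i x y a : Ri L k i x y -> kform k a -> y a -> x (Dia i a).
Proof. by case=> _ [_ Rxy]; apply: Rxy. Qed.

Lemma Ri_of_Box i x y : cpoint L k x -> cpoint L k y ->
  (forall b, kform k b -> x (Box i b) -> y b) -> Ri L k i x y.
Proof.
move=> Hx Hy xy; do 2 split=> //; move=> c kc yc.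
have kdc : kform k (Dia i c) by rewrite /= kc.
case: (cpoint_em normL Hx kdc) => // xndc.
have /xy : x (Box i (Neg c)).
  apply: (cpoint_mp normL Hx xndc); first by rewrite /= kc.
  by apply: (thm_taut normL); taut.
by rewrite kform_Neg => /(_ kc) /(cpoint_contra normL Hy yc).
Qed.

Lemma exists_Ri_set i x (G : form n -> Prop) : cpoint L k x -> kset k G ->
  (forall l, {in l, forall c, G c} -> x (Dia i (bigAnd l))) ->
  exists2 y, Ri L k i x y & forall a, G a -> y a.
Proof.
move=> Hx kG xG.
have [||y Hy yG] := @lindenbaum n L k (fun c => (kform k c /\ x (Box i c)) \/ G c).
- by move=> c [[]|/kG].
- apply: consistentP => l0 l0G Ll0; have [l1 [l2 [xl1 Gl2 Hl]]] := split_subl l0G.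
  have kl2 : kform k (bigAnd l2) by rewrite kform_bigAnd; apply/allP => c /Gl2 /kG.
  have Ll12 : L (Imp (bigAnd l1) (Neg (bigAnd l2))) by apply: (thm_mp_taut normL Ll0); taut_from Hl.
  have xbl2 : x (Box i (Neg (bigAnd l2))).
    apply: (cpoint_closed normL Hx _ _ (thm_trans normL (thm_box_bigAnd normL i l1)
                                                 (thm_box_mono normL i Ll12))).
      by rewrite /= kl2.
    by move=> _ /mapP [c /xl1 [] _ xc ->].
  exact: (cpoint_contra normL Hx xbl2 (xG l2 Gl2)).
exists y => [|a Ga]; last by apply: yG; right.
by apply: Ri_of_Box => // b kb xb; apply: yG; left.
Qed.

Lemma exists_Ri i x a : cpoint L k x -> kform k a -> x (Dia i a) ->
  exists2 y, Ri L k i x y & y a.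
Proof.
move=> Hx ka xa; have [|l la|y Rxy ya] := @exists_Ri_set i x (eq^~ a) Hx.
- by move=> c ->.
- apply: (cpoint_mp normL Hx xa).
    by rewrite kform_Dia kform_bigAnd; apply/allP => c /la ->.
  by apply/(thm_dia_mono normL)/(thm_taut normL)/taut_bigAnd_const.
- by exists y => //; apply: ya.
Qed.

Lemma cpoint_Dia i x a : cpoint L k x -> kform k a ->
  x (Dia i a) <-> exists2 y, Ri L k i x y & y a.
Proof. by move=> Hx ka; split=> [/(exists_Ri Hx ka)|[y /Ri_Dia Rxy ya]]; last by apply: Rxy. Qed.

Lemma cpoint_Box i x a : cpoint L k x -> kform k a ->
  x (Box i a) <-> forall y, Ri L k i x y -> y a.
Proof.
move=> Hx ka; have kna : kform k (Neg a) by rewrite kform_Neg.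
have kb : kform k (Box i (Neg (Neg a))) by rewrite /= ka.
have [Lnn Lnn'] : L (Imp (Box i a) (Box i (Neg (Neg a)))) /\
                  L (Imp (Box i (Neg (Neg a))) (Box i a)).
  by split; apply/(thm_box_mono normL)/(thm_taut normL); taut.
split=> [xa y Rxy|ya].
  have [_ [Hy _]] := Rxy.
  case: (cpoint_em normL Hy ka) => // /(Ri_Dia Rxy kna).
  by move/(cpoint_contra normL Hx (cpoint_mp normL Hx xa kb Lnn)).
apply: NNPP => nxa.
have : x (Dia i (Neg a)).
  by apply/(cpoint_Neg normL Hx kb) => xb; apply/nxa/(cpoint_mp normL Hx xb).
case/(cpoint_Dia i Hx kna) => y Rxy; have [_ [Hy _]] := Rxy.
by move/(cpoint_Neg normL Hy ka); apply; apply: ya.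
Qed.

End Successors.

Lemma dia_iter_succ n j (a : form n) : dia_iter j.+1 a = dia_any (dia_iter j a).
Proof. by elim: j a => [|j IH] a //=; rewrite -IH. Qed.

Section Paths.
Variables (n : nat) (L : logic n) (k : nat).
Hypothesis normL : normal L.
Implicit Types (a b c : form n) (l : seq (form n)) (x y z : form n -> Prop).

Lemma Rc_cpoint x y : Rc L k x y -> cpoint L k x /\ cpoint L k y.
Proof. by case=> i [Hx [Hy _]]. Qed.

Lemma Rstar_cpoint x y : Rstar L k x y -> cpoint L k x /\ cpoint L k y.
Proof. by elim=> [z Hz|x' y' z' /Rc_cpoint [Hx _] _ [_ Hz]]. Qed.

Lemma Rstar_trans x y z : Rstar L k x y -> Rstar L k y z -> Rstar L k x z.
Proof. by elim=> // x' y' z' Rxy _ IH /IH; apply: Rstar_step. Qed.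

Lemma Ri_Rstar i x y : Ri L k i x y -> Rstar L k x y.
Proof.
by move=> Rxy; apply: (Rstar_step (ex_intro _ i Rxy)); apply: Rstar_refl; case: Rxy => _ [].
Qed.

Lemma Rstar_Ri i x y z : Rstar L k x y -> Ri L k i y z -> Rstar L k x z.
Proof. by move=> Rxy /Ri_Rstar; apply: Rstar_trans. Qed.

Lemma cpoint_dia_any x a : cpoint L k x -> kform k a ->
  x (dia_any a) <-> exists2 y, Rc L k x y & y a.
Proof.
move=> Hx ka; rewrite /dia_any (cpoint_bigOr normL Hx); last first.
  by apply/allP => _ /mapP [i _ ->]; rewrite kform_Dia.
split=> [[_ /mapP [i _ ->] /(cpoint_Dia normL i Hx ka) [y Rxy ya]]|[y [i Rxy] ya]].
  by exists y => //; exists i.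
by exists (Dia i a); [apply/mapP; exists i; rewrite ?mem_enum|apply: Ri_Dia Rxy ka ya].
Qed.

Lemma cpoint_dia_le m x a : cpoint L k x -> kform k a ->
  x (dia_le m a) <-> exists2 j, j <= m & x (dia_iter j a).
Proof.
move=> Hx ka; rewrite /dia_le (cpoint_bigOr normL Hx); last first.
  by apply/allP => _ /mapP [j _ ->]; apply: kform_dia_iter.
split=> [[_ /mapP [j jm ->] xj]|[j jm xj]].
  by exists j => //; move: jm; rewrite mem_iota add0n ltnS.
by exists (dia_iter j a) => //; apply/mapP; exists j; rewrite // mem_iota add0n ltnS.
Qed.

Lemma Rstar_of_dia_iter j x a : cpoint L k x -> kform k a ->
  x (dia_iter j a) -> exists2 y, Rstar L k x y & y a.
Proof.
elim: j x => [|j IH] x Hx ka; first by exists x => //; apply: Rstar_refl.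
rewrite dia_iter_succ => /(cpoint_dia_any Hx (kform_dia_iter j ka)) [z Rxz zj].
have [y Rzy ya] := IH z (proj2 (Rc_cpoint Rxz)) ka zj.
by exists y => //; apply: Rstar_step Rzy.
Qed.

Lemma cpoint_meet y (I : eqType) (P : I -> form n -> Prop) (s : seq I) : cpoint L k y ->
  (forall i a b, kform k a -> kform k b -> L (Imp b a) -> P i a -> P i b) ->
  (forall i, i \in s -> exists2 a, y a & P i a) -> exists2 a, y a & forall i, i \in s -> P i a.
Proof.
move=> Hy Panti; elim: s => [|i s IH] Ps.
  by exists (Top n) => //; apply: (cpoint_thm normL Hy) => //; apply: (thm_taut normL); taut.
have [a ya Pa] := Ps i (mem_head i s).
have [|b yb Pb] := IH; first by move=> j js; apply: Ps; rewrite in_cons js orbT.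
have [ka kb] := (cpoint_kform Hy ya, cpoint_kform Hy yb).
exists (And a b) => [|j /predU1P [->|js]]; first by apply/(cpoint_And normL Hy ka kb).
  by apply: Panti Pa; rewrite /= ?ka ?kb //; apply: (thm_taut normL); taut.
by apply: Panti (Pb j js); rewrite /= ?ka ?kb //; apply: (thm_taut normL); taut.
Qed.

Lemma exists_Ri_dia_iter_or_blocked i j x y : cpoint L k x -> cpoint L k y ->
  (exists2 z, Ri L k i x z & forall psi, y psi -> z (dia_iter j psi)) \/
  (exists2 psi, y psi & ~ x (Dia i (dia_iter j psi))).
Proof.
move=> Hx Hy; pose G c := kform k c /\ exists2 psi, y psi & L (Imp (dia_iter j psi) c).
case: (classic (forall l, {in l, forall c, G c} -> x (Dia i (bigAnd l)))) => [xG|nxG].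
  have [|z Rxz zG] := exists_Ri_set normL Hx _ xG; first by move=> c [].
  left; exists z => // psi ypsi; apply: zG; split.
    exact/kform_dia_iter/(cpoint_kform Hy ypsi).
  by exists psi => //; apply: (thm_taut normL); taut.
right; apply: NNPP => nblocked; apply: nxG => l lG.
have [||psi ypsi Lpsi] := @cpoint_meet y _ (fun c psi => L (Imp (dia_iter j psi) c)) l Hy.
- by move=> c a b _ _ Lba; apply: thm_trans (thm_dia_iter_mono normL j Lba).
- by move=> c /lG [_].
case: (classic (x (Dia i (dia_iter j psi)))) => [xpsi|npsi]; last by case: nblocked; exists psi.
apply: (cpoint_mp normL Hx xpsi); first by rewrite kform_Dia kform_bigAnd; apply/allP => c /lG [].
by apply/(thm_dia_mono normL)/(thm_bigAnd_intro normL).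
Qed.

Lemma exists_Rc_dia_iter j x y : cpoint L k x -> cpoint L k y ->
  (forall psi, y psi -> x (dia_any (dia_iter j psi))) ->
  exists2 z, Rc L k x z & forall psi, y psi -> z (dia_iter j psi).
Proof.
move=> Hx Hy xy; apply: NNPP => nz.
have [||psi ypsi npsi] :=
  @cpoint_meet y _ (fun i psi => ~ x (Dia i (dia_iter j psi))) (enum 'I_n) Hy.
- move=> i a b ka kb Lba nxa xb; apply/nxa/(cpoint_mp normL Hx xb).
    by rewrite kform_Dia kform_dia_iter.
  exact/(thm_dia_mono normL)/(thm_dia_iter_mono normL).
- move=> i _; case: (exists_Ri_dia_iter_or_blocked i j Hx Hy) => // [[z Rxz zy]].
  by case: nz; exists z => //; exists i.
have kpsi := kform_dia_iter j (cpoint_kform Hy ypsi).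
case/(cpoint_dia_any Hx kpsi): (xy psi ypsi) => z [i Rxz] zpsi.
by apply: (npsi i); rewrite ?mem_enum //; apply: Ri_Dia Rxz kpsi zpsi.
Qed.

Fixpoint Rpath (j : nat) x y : Prop :=
  if j is j'.+1 then exists2 z, Rc L k x z & Rpath j' z y else cpoint L k x /\ x = y.

Lemma Rpath_Rstar j x y : Rpath j x y -> Rstar L k x y.
Proof.
elim: j x => [|j IH] x /=; first by case=> Hx <-; apply: Rstar_refl.
by case=> z Rxz /IH; apply: Rstar_step.
Qed.

Lemma Rpath_of_dia_iter j x y : cpoint L k x -> cpoint L k y ->
  (forall psi, y psi -> x (dia_iter j psi)) -> Rpath j x y.
Proof.
elim: j x => [|j IH] x Hx Hy xy /=; first by split=> //; apply: (cpoint_eq Hx Hy xy).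
have [|z Rxz zy] := @exists_Rc_dia_iter j x y Hx Hy; first by move=> psi /xy; rewrite dia_iter_succ.
by exists z => //; apply: IH => //; case: (Rc_cpoint Rxz).
Qed.

Lemma Rstar_of_dia_star m x y : cpoint L k x -> cpoint L k y ->
  (forall psi, y psi -> x (dia_star m psi)) -> Rstar L k x y.
Proof.
move=> Hx Hy xy; apply: NNPP => nR.
have [||psi ypsi npsi] := @cpoint_meet y _ (fun j psi => ~ x (dia_iter j psi)) (iota 0 m.+1) Hy.
- move=> j a b ka kb Lba nxa xb; apply: nxa.
  exact: (cpoint_mp normL Hx xb (kform_dia_iter j ka) (thm_dia_iter_mono normL j Lba)).
- move=> j _; apply: NNPP => nj; apply/nR/(@Rpath_Rstar j)/Rpath_of_dia_iter => // psi ypsi.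
  by apply: NNPP => npsi; apply: nj; exists psi.
have [j jm xj] := (cpoint_dia_le m Hx (cpoint_kform Hy ypsi)).1 (xy psi ypsi).
by apply: (npsi j) xj; rewrite mem_iota add0n ltnS.
Qed.

End Paths.

Section Pretransitive.
Variables (n : nat) (L : logic n) (k m : nat).
Hypotheses (normL : normal L) (Hpt : pretrans_at L m).
Implicit Types (a : form n) (x y : form n -> Prop).

(* A path of length m+1 is shortened by the pretransitivity axiom. *)
Lemma dia_star_of_Rstar x y a : Rstar L k x y -> kform k a -> y a -> x (dia_star m a).
Proof.
elim=> [z Hz|x' y' z Rxy _ IH] ka za.
  by apply/(cpoint_dia_le normL m Hz ka); exists 0.
have [Hx Hy] := Rc_cpoint Rxy.
have [j jm yj] := (cpoint_dia_le normL m Hy ka).1 (IH ka za).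
have xj1 : x' (dia_iter j.+1 a).
  rewrite dia_iter_succ; apply/(cpoint_dia_any normL Hx (kform_dia_iter j ka)).
  by exists y'.
case: (ltnP j m) => [jm'|mj]; first by apply/(cpoint_dia_le normL m Hx ka); exists j.+1.
have ejm : j = m by apply/eqP; rewrite eqn_leq jm mj.
rewrite ejm in xj1.
exact: (cpoint_mp normL Hx xj1 (kform_dia_star m ka) (thm_pretrans a normL Hpt)).
Qed.

Lemma Rstar_char x y : cpoint L k x -> cpoint L k y ->
  Rstar L k x y <-> forall psi, y psi -> x (dia_star m psi).
Proof.
move=> Hx Hy; split=> [Rxy psi ypsi|]; last exact: Rstar_of_dia_star.
exact: dia_star_of_Rstar Rxy (cpoint_kform Hy ypsi) ypsi.
Qed.

Lemma cpoint_dia_star x a : cpoint L k x -> kform k a ->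
  x (dia_star m a) <-> exists2 y, Rstar L k x y & y a.
Proof.
move=> Hx ka; split=> [/(cpoint_dia_le normL m Hx ka) [j _]|[y Rxy ya]].
  exact: Rstar_of_dia_iter.
exact: dia_star_of_Rstar Rxy ka ya.
Qed.

Lemma cpoint_box_star x a : cpoint L k x -> kform k a ->
  x (box_star m a) <-> forall y, Rstar L k x y -> y a.
Proof.
move=> Hx ka; have kna : kform k (Neg a) by rewrite kform_Neg.
rewrite /box_star (cpoint_Neg normL Hx (kform_dia_star m kna)) (cpoint_dia_star Hx kna).
split=> [nya y Rxy|ya [y Rxy]].
  have [_ Hy] := Rstar_cpoint Rxy.
  by case: (cpoint_em normL Hy ka) => // yna; case: nya; exists y.
by move/(cpoint_Neg normL (proj2 (Rstar_cpoint Rxy)) ka); apply; apply: ya.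
Qed.

Lemma box_star_Rstar x y a : cpoint L k x -> kform k a ->
  x (box_star m a) -> Rstar L k x y -> y (box_star m a).
Proof.
move=> Hx ka xa Rxy; have [_ Hy] := Rstar_cpoint Rxy.
apply/(cpoint_box_star Hy ka) => z Ryz.
exact: (cpoint_box_star Hx ka).1 xa z (Rstar_trans Rxy Ryz).
Qed.

End Pretransitive.

Section Depth.
Variables (n : nat) (L : logic n) (k : nat).
Implicit Types (x y v w : form n -> Prop).

Lemma depth_le_mono x i j : i <= j -> depth_le L k x i -> depth_le L k x j.
Proof.
move=> ij xi [y [Rxy0 chain]]; apply: xi; exists y; split=> // j' j'i.
by apply: chain; apply: leq_trans ij.
Qed.

Lemma depth_le_Rstar x w i : Rstar L k x w -> depth_le L k x i -> depth_le L k w i.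
Proof.
by move=> Rxw xi [y [Rwy0 chain]]; apply: xi; exists y; split=> //; apply: Rstar_trans Rwy0.
Qed.

Lemma depth_le_strict x v i : Rstar L k x v -> ~ Rstar L k v x ->
  depth_le L k x i.+1 -> depth_le L k v i.
Proof.
move=> Rxv nRvx xi [y [Rvy0 chain]]; apply: xi.
exists (fun j => if j is j'.+1 then y j' else x); split.
  by apply: Rstar_refl; case: (Rstar_cpoint Rxv).
case=> [|j] ji //=; last exact: chain.
by split=> [|Ry0x]; [apply: Rstar_trans Rvy0|apply/nRvx/(Rstar_trans Rvy0)].
Qed.

Lemma depth_le0 x : cpoint L k x -> ~ depth_le L k x 0.
Proof. by move=> Hx; apply; exists (fun _ => x); split=> //; apply: Rstar_refl. Qed.

Lemma depth_le_succ x i : cpoint L k x ->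
  (forall w, Rstar L k x w -> ~ Rstar L k w x -> depth_le L k w i) -> depth_le L k x i.+1.
Proof.
move=> Hx above [y [Rxy0 chain]]; have [R01 nR10] := chain 0 (ltn0Sn i).
have [Rxy1 nRy1x] : Rstar L k x (y 1) /\ ~ Rstar L k (y 1) x.
  by split=> [|Ry1x]; [apply: Rstar_trans R01|apply/nR10/(Rstar_trans Ry1x)].
apply: (above _ Rxy1 nRy1x); exists (fun j => y j.+1); split=> [|j ji].
  by apply: Rstar_refl; case: (Rstar_cpoint R01).
exact: chain.
Qed.

Lemma depth_exact x d : cpoint L k x -> depth_le L k x d ->
  exists2 i, i < d & depth_le L k x i.+1 /\ ~ depth_le L k x i.
Proof.
move=> Hx; elim: d => [/(depth_le0 Hx) //|d IH xd].
case: (classic (depth_le L k x d)) => [/IH [i id xi]|nxd]; last by exists d.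
by exists i => //; apply: ltnW.
Qed.

End Depth.

Section Countermodel.
Variables (n : nat) (L : logic n) (k : nat).
Hypothesis normL : normal L.

Lemma cpoint_countermodel (Lg : logic n) phi : normal Lg -> (forall a, L a -> Lg a) ->
  kform k phi -> ~ Lg phi ->
  exists2 x, cpoint L k x & (forall a, kform k a -> Lg a -> x a) /\ ~ x phi.
Proof.
move=> normLg LLg kphi nphi.
have [||x Hx xphi] := @lindenbaum n Lg k (eq^~ (Neg phi)); first by move=> c ->; rewrite kform_Neg.
  apply: consistentP => l lphi Ll; apply: nphi; apply: (thm_mp_taut normLg Ll) => f.
  by move: (taut_bigAnd_const lphi f); taut_cases f.
have xnphi := xphi _ erefl.
exists x; last by split=> [a ka /(cpoint_thm normLg Hx ka)|/(cpoint_contra normLg Hx)]; last exact.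
case: (Hx) => kx cx maxx; split=> // [l lx Ll|y ky cy xy a ya].
  by apply: (cx l lx); apply: LLg.
case: (cpoint_em normLg Hx (ky a ya)) => // xna.
case: (cy [:: a; Neg a]); first by move=> c [<-|[<-|[]]] //; apply: xy.
by apply: (thm_taut normL); taut.
Qed.

End Countermodel.

Section DepthFormulas.
Variables (n : nat) (L : logic n) (k m : nat).
Hypotheses (normL : normal L) (Hpt : pretrans_at L m).
Implicit Types (a : form n) (x y v w : form n -> Prop).

Lemma Bform_valid i v s : cpoint L k v -> depth_le L k v i -> ksubst k s ->
  v (subst s (Bform n m i)).
Proof.
elim: i v => [|i IH] v Hv vi ks; first by case: (depth_le0 Hv vi).
have [ksi kB] := (ks i.+1, kform_subst (Bform n m i) ks).
have kor : kform k (Or (dia_star m (s i.+1)) (subst s (Bform n m i))).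
  by rewrite kform_Or kform_dia_star.
rewrite subst_Bform_succ (cpoint_Imp normL Hv ksi (kform_box_star m kor)) => vsi.
apply/(cpoint_box_star normL Hpt Hv kor) => w Rvw; have [_ Hw] := Rstar_cpoint Rvw.
apply/(cpoint_Or normL Hw (kform_dia_star m ksi) kB).
case: (classic (Rstar L k w v)) => [Rwv|nRwv].
  by left; apply/(cpoint_dia_star normL Hpt Hw ksi); exists v.
by right; apply: IH => //; apply: depth_le_strict Rvw nRwv vi.
Qed.

Lemma Bform_refuted i (y : nat -> form n -> Prop) : cpoint L k (y 0) ->
  (forall j, j < i -> Rstar L k (y j) (y j.+1) /\ ~ Rstar L k (y j.+1) (y j)) ->
  exists2 s, ksubst k s & ~ y 0 (subst s (Bform n m i)).
Proof.
elim: i y => [|i IH] y Hy0 chain.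
  by exists (ksubst_id n k); [apply: ksubst_ksubst_id|exact: (cpoint_Bot normL Hy0)].
have [R01 nR10] := chain 0 (ltn0Sn i); have [_ Hy1] := Rstar_cpoint R01.
have [|s' ks' ns'] := IH (fun j => y j.+1) Hy1; first by move=> j ji; apply: chain.
(* p_{i+1} is instantiated by a formula of y 0 that y 1 does not see back. *)
have [psi [kpsi y0psi ny1psi]] : exists psi, [/\ kform k psi, y 0 psi & ~ y 1 (dia_star m psi)].
  apply: NNPP => npsi; apply/nR10/(Rstar_char normL Hpt Hy1 Hy0) => psi y0psi.
  by apply: NNPP => ny1; apply: npsi; exists psi; rewrite (cpoint_kform Hy0 y0psi).
pose s j := if j == i.+1 then psi else s' j.
have ks : ksubst k s by move=> j; rewrite /s; case: ifP.
have es : subst s (Bform n m i) = subst s' (Bform n m i).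
  apply: subst_Bform_eq => j ji; rewrite /s ifF //.
  by apply/eqP => eji; rewrite eji ltnn in ji.
have kor : kform k (Or (dia_star m psi) (subst s' (Bform n m i))).
  by rewrite kform_Or kform_dia_star // kform_subst.
exists s => //; rewrite subst_Bform_succ es /s eqxx.
rewrite (cpoint_Imp normL Hy0 kpsi (kform_box_star m kor)) => /(_ y0psi).
move/(cpoint_box_star normL Hpt Hy0 kor)/(_ _ R01).
by case/(cpoint_Or normL Hy1 (kform_dia_star m kpsi) (kform_subst _ ks')).
Qed.

Definition valid_above x a : Prop :=
  forall s, ksubst k s -> forall w, Rstar L k x w -> w (subst s a).

Lemma valid_above_thm x a : L a -> valid_above x a.
Proof.
move=> La s ks w Rxw; have [_ Hw] := Rstar_cpoint Rxw.
exact: (cpoint_thm normL Hw (kform_subst a ks) (thm_subst normL s La)).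
Qed.

Lemma valid_above_normal x : normal (valid_above x).
Proof.
split=> [a /(thm_taut normL)|i a b|a b Hab Ha s ks w Rxw|i a Ha s ks w Rxw|t a Ha s ks].
- exact: valid_above_thm.
- exact: valid_above_thm (thm_K normL i a b).
- have [_ Hw] := Rstar_cpoint Rxw.
  move: (Hab s ks w Rxw) (Ha s ks w Rxw).
  by rewrite subst_Imp (cpoint_Imp normL Hw (kform_subst a ks) (kform_subst b ks)); apply.
- have [_ Hw] := Rstar_cpoint Rxw.
  apply/(cpoint_Box normL i Hw (kform_subst a ks)) => z Rwz.
  exact: (Ha s ks z (Rstar_Ri Rxw Rwz)).
- by rewrite subst_comp; apply: Ha => j; apply: kform_subst.
Qed.

(* For the converse direction, valid_above x is a normal logic containing L and
   B_h, hence L[h]. *)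
Lemma cpoint_Lh_depth_le h x : cpoint L k x ->
  (forall a, kform k a -> Lh L m h a -> x a) <-> depth_le L k x h.
Proof.
move=> Hx; split=> [xLh [y [Rxy0 chain]]|xh a ka Lha].
  have [s ks ny0] := Bform_refuted (proj2 (Rstar_cpoint Rxy0)) chain.
  have kB : kform k (subst s (Bform n m h)) by apply: kform_subst.
  have LhB : Lh L m h (subst s (box_star m (Bform n m h))).
    exact: (thm_subst (ext_normal _ _) s (thm_box_star (ext_normal _ _) m (@ext_ax _ L _))).
  move: (xLh _ (kform_subst _ ks) LhB); rewrite subst_box_star.
  by move/(cpoint_box_star normL Hpt Hx kB)/(_ _ Rxy0).
have : valid_above x a.
  apply: Lha (valid_above_normal x) (@valid_above_thm x) _ => s ks w Rxw.
  apply: Bform_valid ks; first by case: (Rstar_cpoint Rxw).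
  exact: depth_le_Rstar Rxw xh.
move/(_ _ (ksubst_ksubst_id n k) x (Rstar_refl Hx)).
by rewrite subst_ksubst_id.
Qed.

End DepthFormulas.

Section CharForms.
Variables (n : nat) (L : logic n) (k : nat).
Hypothesis normL : normal L.
Implicit Types (Q : seq (form n)) (pi : seq bool).

Definition literal (b : bool) (a : form n) := if b then a else Neg a.

Definition char_form pi Q := bigAnd [seq literal ba.1 ba.2 | ba <- zip pi Q].

Lemma kform_char_form pi Q : all (kform k) Q -> kform k (char_form pi Q).
Proof.
rewrite /char_form kform_bigAnd; elim: Q pi => [|a Q IH] [|b pi] //= /andP [ka kQ].
by rewrite IH // andbT; case: b => /=; rewrite ?ka.
Qed.

Lemma cpoint_char_form x pi Q : cpoint L k x -> all (kform k) Q -> size pi = size Q ->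
  x (char_form pi Q) <-> [seq truthb (x a) | a <- Q] = pi.
Proof.
move=> Hx; elim: Q pi => [|a Q IH] [|b pi] //= kQ /eqP; rewrite ?eqSS // => /eqP spi.
  by split=> // _; apply: (cpoint_thm normL Hx) => //; apply: (thm_taut normL); taut.
case/andP: kQ => ka kQ.
have kl : kform k (literal b a) by case: b; rewrite /= ?ka.
rewrite (cpoint_And normL Hx kl (kform_char_form pi kQ)) IH //.
have -> : x (literal b a) <-> truthb (x a) = b.
  clear kl; case: b; first by split=> [/truthbP|/truthbP].
  rewrite /= (cpoint_Neg normL Hx ka).
  by split=> [nxa|/negbT/truthbP //]; apply/negbTE/truthbP.
by split=> [[-> ->]|[-> ->]].
Qed.

End CharForms.

Section Tabular.
Variables (n : nat) (L : logic n) (k m h : nat) (reps : seq (form n)).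
Hypotheses (normL : normal L) (Hpt : pretrans_at L m).
Hypotheses (kreps : all (kform k) reps)
  (reps_cover : forall a, kform k a -> exists2 b, List.In b reps & Lh L m h (Iff a b)).
Implicit Types (a : form n) (pi : seq bool) (x y u v w : form n -> Prop).

Definition shallow x := cpoint L k x /\ depth_le L k x h.

Definition atoms : seq (form n) := [seq Var n j | j <- iota 0 k] ++ reps.

Lemma kform_atoms : all (kform k) atoms.
Proof.
rewrite all_cat kreps andbT; apply/allP => c /mapP [j].
by rewrite mem_iota add0n => /andP [_ jk] ->.
Qed.

Definition profile x : seq bool := [seq truthb (x a) | a <- atoms].

Lemma size_profile x : size (profile x) = size atoms.
Proof. exact: size_map. Qed.

Definition char pi := char_form pi atoms.

Lemma kform_char pi : kform k (char pi).
Proof. exact: kform_char_form kform_atoms. Qed.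

Lemma cpoint_char x pi : cpoint L k x -> size pi = size atoms -> x (char pi) <-> profile x = pi.
Proof. by move=> Hx; apply: (cpoint_char_form normL Hx kform_atoms). Qed.

Lemma shallow_Rstar x y : shallow x -> Rstar L k x y -> shallow y.
Proof. by move=> [_ xh] Rxy; split; [case: (Rstar_cpoint Rxy)|apply: depth_le_Rstar Rxy xh]. Qed.

Lemma shallow_Lh_iff x a b : shallow x -> kform k a -> kform k b ->
  Lh L m h (Iff a b) -> x a <-> x b.
Proof.
move=> [Hx xh] ka kb Lab; have kab : kform k (Iff a b) by rewrite /= ka kb.
move: ((cpoint_Lh_depth_le normL Hpt h Hx).2 xh _ kab Lab).
by rewrite (cpoint_And normL Hx) ?(cpoint_Imp normL Hx) //= ?ka ?kb //; case.
Qed.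

Lemma shallow_profile_inj x y : shallow x -> shallow y -> profile x = profile y -> x = y.
Proof.
move=> Sx Sy pxy; apply: (cpoint_eq Sx.1 Sy.1) => a ya.
have ka := cpoint_kform Sy.1 ya; have [b /InP brep Lab] := reps_cover ka.
have kb : kform k b by apply: (allP kreps).
have batom : b \in atoms by rewrite mem_cat brep orbT.
have : truthb (y b) by apply/truthbP/(shallow_Lh_iff Sy ka kb Lab).
by rewrite -((eq_in_map _ _ _).2 pxy b batom) => /truthbP /(shallow_Lh_iff Sx ka kb Lab).
Qed.

Definition profiles : seq (seq bool) :=
  [seq pi <- [seq tval t | t <- enum {: (size atoms).-tuple bool}]
   | truthb (exists2 x, shallow x & profile x = pi)].

Lemma profilesP pi : pi \in profiles <-> exists2 x, shallow x & profile x = pi.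
Proof.
rewrite mem_filter; split=> [/andP [/truthbP] //|[x Sx <-]].
apply/andP; split; first by apply/truthbP; exists x.
have sx : size (profile x) == size atoms by rewrite size_profile.
by apply/mapP; exists (Tuple sx); rewrite ?mem_enum.
Qed.

Lemma profile_mem x : shallow x -> profile x \in profiles.
Proof. by move=> Sx; apply/profilesP; exists x. Qed.

Lemma size_profiles pi : pi \in profiles -> size pi = size atoms.
Proof. by case/profilesP => x _ <-; apply: size_profile. Qed.

Lemma char_profile x pi : cpoint L k x -> pi \in profiles -> x (char pi) -> profile x = pi.
Proof. by move=> Hx /size_profiles spi /(cpoint_char Hx spi). Qed.

Lemma char_of_profile x : cpoint L k x -> x (char (profile x)).
Proof. by move=> Hx; apply/(cpoint_char Hx (size_profile x)). Qed.

(* Only meaningful for pi \in profiles. *)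
Definition point_of pi : form n -> Prop :=
  epsilon (inhabits (fun _ => False)) (fun x => shallow x /\ profile x = pi).

Lemma point_ofP pi : pi \in profiles -> shallow (point_of pi) /\ profile (point_of pi) = pi.
Proof.
case/profilesP => x Sx px.
by apply: (epsilon_spec _ (fun x => shallow x /\ profile x = pi)); exists x.
Qed.

Lemma point_of_profile x : shallow x -> point_of (profile x) = x.
Proof.
move=> Sx; have [Sp pp] := point_ofP (profile_mem Sx).
exact: shallow_profile_inj.
Qed.

Definition succ_profiles i pi :=
  [seq pi' <- profiles | truthb (Ri L k i (point_of pi) (point_of pi'))].

Definition local_form pi :=
  bigAnd [seq And (Box i (bigOr (map char (succ_profiles i pi))))
                  (bigAnd [seq Dia i (char pi') | pi' <- succ_profiles i pi]) | i <- enum 'I_n].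

Definition diagram :=
  And (box_star m (bigOr (map char profiles)))
      (bigAnd [seq box_star m (Imp (char pi) (local_form pi)) | pi <- profiles]).

Lemma kform_local_form pi : kform k (local_form pi).
Proof.
rewrite kform_bigAnd; apply/allP => _ /mapP [i _ ->].
rewrite kform_And /= kform_bigOr kform_bigAnd.
apply/andP; split; apply/allP => _ /mapP [pi' _ ->]; rewrite ?kform_Dia; exact: kform_char.
Qed.

Lemma kform_diagram : kform k diagram.
Proof.
rewrite kform_And kform_box_star ?kform_bigAnd ?kform_bigOr.
  by apply/allP => _ /mapP [pi _ ->]; rewrite kform_box_star //= kform_char kform_local_form.
by apply/allP => _ /mapP [pi _ ->]; apply: kform_char.
Qed.

Lemma cpoint_local_form w pi : cpoint L k w ->
  w (local_form pi) <-> forall i,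
    (forall u, Ri L k i w u -> exists2 pi', pi' \in succ_profiles i pi & u (char pi')) /\
    (forall pi', pi' \in succ_profiles i pi -> w (Dia i (char pi'))).
Proof.
move=> Hw.
have kS i : all (kform k) (map char (succ_profiles i pi)).
  by apply/allP => _ /mapP [pi' _ ->]; apply: kform_char.
have kD i : all (kform k) [seq Dia i (char pi') | pi' <- succ_profiles i pi].
  by apply/allP => _ /mapP [pi' _ ->]; rewrite kform_Dia kform_char.
have local_i i : w (And (Box i (bigOr (map char (succ_profiles i pi))))
                        (bigAnd [seq Dia i (char pi') | pi' <- succ_profiles i pi])) <->
    (forall u, Ri L k i w u -> exists2 pi', pi' \in succ_profiles i pi & u (char pi')) /\
    (forall pi', pi' \in succ_profiles i pi -> w (Dia i (char pi'))).
  have kB : kform k (Box i (bigOr (map char (succ_profiles i pi)))) by rewrite /= kform_bigOr kS.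
  have kDs : kform k (bigAnd [seq Dia i (char pi') | pi' <- succ_profiles i pi]).
    by rewrite kform_bigAnd kD.
  rewrite (cpoint_And normL Hw kB kDs) (cpoint_Box normL i Hw) ?kform_bigOr ?kS //.
  rewrite (cpoint_bigAnd normL Hw (kD i)).
  split=> [[wS wD]|[wS wD]]; split=> [u Ru|].
  - have [_ [Hu _]] := Ru; have := wS u Ru.
    by case/(cpoint_bigOr normL Hu (kS i)) => _ /mapP [pi' pi'in ->]; exists pi'.
  - by move=> pi' pi'in; apply: wD; apply: map_f.
  - have [_ [Hu _]] := Ru; apply/(cpoint_bigOr normL Hu (kS i)).
    by case: (wS u Ru) => pi' pi'in upi'; exists (char pi') => //; apply: map_f.
  - by move=> _ /mapP [pi' pi'in ->]; apply: wD.
rewrite /local_form (cpoint_bigAnd normL Hw); last by rewrite -kform_bigAnd kform_local_form.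
split=> [wl i|wl _ /mapP [i _ ->]]; apply/local_i; last exact: wl.
by apply: wl; apply: map_f; rewrite mem_enum.
Qed.

Lemma cpoint_diagram w : cpoint L k w ->
  w diagram <-> forall v, Rstar L k w v -> profile v \in profiles /\ v (local_form (profile v)).
Proof.
move=> Hw.
have kC : all (kform k) (map char profiles) by apply/allP => _ /mapP [pi _ ->]; apply: kform_char.
have kI pi : kform k (Imp (char pi) (local_form pi)) by rewrite /= kform_char kform_local_form.
have kIs : all (kform k) [seq box_star m (Imp (char pi) (local_form pi)) | pi <- profiles].
  by apply/allP => _ /mapP [pi _ ->]; apply: kform_box_star.
have kCs : kform k (bigOr (map char profiles)) by rewrite kform_bigOr.
rewrite (cpoint_And normL Hw (kform_box_star m kCs)) ?kform_bigAnd //.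
rewrite (cpoint_box_star normL Hpt Hw kCs) (cpoint_bigAnd normL Hw kIs).
split=> [[wC wI] v Rwv|wv].
  have [_ Hv] := Rstar_cpoint Rwv.
  have [_ /mapP [pi pin ->] vpi] := (cpoint_bigOr normL Hv kC).1 (wC v Rwv).
  rewrite (char_profile Hv pin vpi); split=> //.
  move: (wI _ (map_f (fun pi => box_star m (Imp (char pi) (local_form pi))) pin)).
  move/(cpoint_box_star normL Hpt Hw (kI pi))/(_ v Rwv).
  by move/(cpoint_Imp normL Hv (kform_char pi) (kform_local_form pi)); apply.
split=> [v Rwv|_ /mapP [pi pin ->]].
  have [_ Hv] := Rstar_cpoint Rwv; apply/(cpoint_bigOr normL Hv kC).
  by exists (char (profile v)); [apply: map_f; case: (wv v Rwv)|apply: char_of_profile].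
apply/(cpoint_box_star normL Hpt Hw (kI pi)) => v Rwv; have [_ Hv] := Rstar_cpoint Rwv.
apply/(cpoint_Imp normL Hv (kform_char pi) (kform_local_form pi)).
by move/(char_profile Hv pin) <-; case: (wv v Rwv).
Qed.

Lemma succ_profilesP i x y : shallow x -> shallow y ->
  (profile y \in succ_profiles i (profile x)) = truthb (Ri L k i x y).
Proof. by move=> Sx Sy; rewrite mem_filter !point_of_profile // profile_mem // andbT. Qed.

Lemma diagram_complete x : shallow x -> x diagram.
Proof.
move=> Sx; apply/(cpoint_diagram Sx.1) => v Rxv; have Sv := shallow_Rstar Sx Rxv.
split; first exact: profile_mem.
apply/(cpoint_local_form _ Sv.1) => i; split=> [u Rvu|pi'].
  have Su := shallow_Rstar Sv (Ri_Rstar Rvu).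
  exists (profile u); last exact: (char_of_profile Su.1).
  by rewrite succ_profilesP //; apply/truthbP.
rewrite mem_filter point_of_profile // => /andP [/truthbP Rvz pi'in].
have [Sz pz] := point_ofP pi'in.
by apply: (Ri_Dia Rvz (kform_char pi')); move: (char_of_profile Sz.1); rewrite pz.
Qed.

Lemma diagram_agree x a : cpoint L k x -> x diagram -> kform k a ->
  forall w, Rstar L k x w -> w a <-> point_of (profile w) a.
Proof.
move=> Hx /(cpoint_diagram Hx) xD.
elim: a => [p| |a IHa b IHb|i a IHa] ka w Rxw.
all: have [[Sz pz] wloc] := (point_ofP (xD w Rxw).1, (xD w Rxw).2).
all: have [[Hz _] [_ Hw]] := (Sz, Rstar_cpoint Rxw).
- have patom : Var n p \in atoms by rewrite mem_cat map_f // mem_iota add0n.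
  have e := (eq_in_map _ _ _).2 pz _ patom.
  by split=> /truthbP xp; apply/truthbP; [rewrite e|rewrite -e].
- by split=> [/(cpoint_Bot normL Hw)|/(cpoint_Bot normL Hz)].
- case/andP: ka => ka kb.
  by rewrite (cpoint_Imp normL Hw ka kb) (cpoint_Imp normL Hz ka kb) (IHa ka w Rxw) (IHb kb w Rxw).
have {}ka : kform k a := ka.
rewrite (cpoint_Box normL i Hw ka) (cpoint_Box normL i Hz ka).
have [wsucc wdia] := (cpoint_local_form _ Hw).1 wloc i.
split=> [wa u' Rzu'|za u Rwu].
  have Su' := shallow_Rstar Sz (Ri_Rstar Rzu').
  have : profile u' \in succ_profiles i (profile w).
    by rewrite -{1}pz succ_profilesP //; apply/truthbP.
  move/wdia/(cpoint_Dia normL i Hw (kform_char _)) => [u Rwu upu'].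
  have [_ Hu] := Rstar_cpoint (Rstar_Ri Rxw Rwu).
  rewrite -(point_of_profile Su') -(char_profile Hu (profile_mem Su') upu').
  by apply/(IHa ka u (Rstar_Ri Rxw Rwu)); apply: wa.
have [pi'] := wsucc u Rwu; rewrite mem_filter => /andP [/truthbP Rzp pi'in] upi'.
have [_ Hu] := Rstar_cpoint (Rstar_Ri Rxw Rwu).
by apply/(IHa ka u (Rstar_Ri Rxw Rwu)); rewrite (char_profile Hu pi'in upi'); apply: za.
Qed.

Lemma diagram_sound x : cpoint L k x -> x diagram -> shallow x.
Proof.
move=> Hx xD; have [Sz _] := point_ofP ((cpoint_diagram Hx).1 xD x (Rstar_refl Hx)).1.
suff ex : x = point_of (profile x) by rewrite ex.
apply: (cpoint_eq Hx Sz.1) => a za.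
by apply/(diagram_agree Hx xD (cpoint_kform Sz.1 za) (Rstar_refl Hx)).
Qed.

Definition depth_form (i : nat) :=
  And diagram (bigOr [seq char pi | pi <- profiles & truthb (depth_le L k (point_of pi) i)]).

Lemma kform_depth_form i : kform k (depth_form i).
Proof.
rewrite kform_And kform_diagram kform_bigOr.
by apply/allP => _ /mapP [pi _ ->]; apply: kform_char.
Qed.

Lemma cpoint_depth_form i x : i <= h -> cpoint L k x ->
  x (depth_form i) <-> depth_le L k x i.
Proof.
move=> ih Hx.
have kC : all (kform k) [seq char pi | pi <- profiles & truthb (depth_le L k (point_of pi) i)].
  by apply/allP => _ /mapP [pi _ ->]; apply: kform_char.
rewrite (cpoint_And normL Hx kform_diagram) ?kform_bigOr // (cpoint_bigOr normL Hx kC).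
split=> [[xD [_ /mapP [pi + ->]]]|xi].
  rewrite mem_filter => /andP [/truthbP zi pin] /(char_profile Hx pin) px.
  by move: zi; rewrite -px point_of_profile //; apply: diagram_sound.
have Sx : shallow x by split=> //; apply: depth_le_mono ih xi.
split; first exact: diagram_complete.
exists (char (profile x)); last exact: char_of_profile.
by apply: map_f; rewrite mem_filter point_of_profile // profile_mem // andbT; apply/truthbP.
Qed.

End Tabular.

Section MaximalRefuter.
Variables (n : nat) (L : logic n) (k m : nat).
Hypotheses (normL : normal L) (Hpt : pretrans_at L m).
Variables (B : form n) (x : form n -> Prop).
Hypotheses (kB : kform k B) (Hx : cpoint L k x) (nxB : ~ x B).
Implicit Types (a psi : form n) (q u w : form n -> Prop).

Lemma box_star_Neg_of_not_dia_star q psi : cpoint L k q -> kform k psi ->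
  ~ q (dia_star m psi) -> q (box_star m (Neg psi)).
Proof.
move=> Hq kpsi nq; have knpsi : kform k (Neg psi) by rewrite kform_Neg.
apply/(cpoint_box_star normL Hpt Hq knpsi) => w Rqw.
have [_ Hw] := Rstar_cpoint Rqw; apply/(cpoint_Neg normL Hw kpsi) => wpsi.
by apply: nq; apply/(cpoint_dia_star normL Hpt Hq kpsi); exists w.
Qed.

(* climb j is a chain of refuters of B: step j moves, if possible, to a point
   above where Dia^* of the j-th formula fails. The limit point above the whole
   chain is maximal, since any point above it that refutes B and avoids
   Dia^* psi was already available at step (pickle psi). *)
Definition escape j q w :=
  [/\ Rstar L k q w, ~ w B, kform k (enum_form n j) & ~ w (dia_star m (enum_form n j))].

Definition escape_from j q : form n -> Prop :=
  if excluded_middle_informative (exists w, escape j q w)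
  then epsilon (inhabits (fun _ => False)) (escape j q) else q.

Fixpoint climb j : form n -> Prop := if j is j'.+1 then escape_from j' (climb j') else x.

Lemma escape_fromP j q : (exists w, escape j q w) -> escape j q (escape_from j q).
Proof.
by rewrite /escape_from; case: excluded_middle_informative => // ex _; apply: epsilon_spec.
Qed.

Lemma climb_step j : Rstar L k (climb j) (climb j.+1) /\ ~ climb j.+1 B.
Proof.
have step q j' : cpoint L k q -> ~ q B -> Rstar L k q (escape_from j' q) /\ ~ escape_from j' q B.
  move=> Hq nqB; case: (classic (exists w, escape j' q w)) => [/escape_fromP [] //|nex].
  rewrite /escape_from; case: (excluded_middle_informative _) => [ex|_] /=; first by case: nex.
  by split=> //; apply: Rstar_refl.
elim: j => [|j [Rj nj]]; first exact: step.
by apply: step nj; case: (Rstar_cpoint Rj).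
Qed.

Lemma climb_cpoint j : cpoint L k (climb j).
Proof. by case: (Rstar_cpoint (climb_step j).1). Qed.

Lemma climb_mono j j' : j <= j' -> Rstar L k (climb j) (climb j').
Proof.
elim: j' => [|j' IH]; first by rewrite leqn0 => /eqP ->; apply: Rstar_refl.
rewrite leq_eqVlt => /predU1P [->|/IH Rj]; first by apply: Rstar_refl; apply: climb_cpoint.
exact: Rstar_trans Rj (climb_step j').1.
Qed.

Lemma climb_not_B j : ~ climb j B.
Proof. by case: j => [|j] //; apply: (climb_step j).2. Qed.

Lemma climb_box_star_mono c : kform k c ->
  forall j j', j <= j' -> climb j (box_star m c) -> climb j' (box_star m c).
Proof.
move=> kc j j' jj' cj.
exact: (box_star_Rstar normL Hpt (climb_cpoint j) kc cj (climb_mono jj')).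
Qed.

Definition climb_limit c := c = Neg B \/ (kform k c /\ exists j, climb j (box_star m c)).

Lemma consistent_climb_limit : consistent L climb_limit.
Proof.
apply: consistentP => l lG Ll; have [lB [lbox [lBB lboxG Hl]]] := split_subl lG.
have [||N Nbox] := @subl_chain _ (fun j c => kform k c /\ climb j (box_star m c)) lbox.
- by move=> j j' c jj' [kc cj]; split=> //; apply: climb_box_star_mono cj.
- by move=> c /lboxG [kc [j cj]]; exists j.
have HN := climb_cpoint N.
have Nl : climb N (bigAnd lbox).
  apply/(cpoint_bigAnd normL HN) => [|c /Nbox [kc cN]]; first by apply/allP => c /Nbox [].
  exact: (cpoint_box_star normL Hpt HN kc).1 cN _ (Rstar_refl HN).
apply: (@climb_not_B N); apply: (cpoint_mp normL HN Nl kB).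
apply: (thm_mp_taut normL Ll) => f.
by move: (Hl f) (taut_bigAnd_const (b := Neg B) lBB f); taut_cases f.
Qed.

Lemma exists_maximal_refuter : exists u,
  [/\ Rstar L k x u, ~ u B & forall w, Rstar L k u w -> ~ w B -> Rstar L k w u].
Proof.
have [|u Hu uG] := lindenbaum (_ : kset k climb_limit) consistent_climb_limit.
  by move=> c [->|[]] //; rewrite kform_Neg.
have blocked j psi : u psi -> ~ climb j (box_star m (Neg psi)).
  move=> upsi cj; apply: (cpoint_contra normL Hu upsi); apply: uG; right.
  by split; [rewrite kform_Neg (cpoint_kform Hu upsi)|exists j].
have climb_u j : Rstar L k (climb j) u.
  apply/(Rstar_char normL Hpt (climb_cpoint j) Hu) => psi upsi; apply: NNPP => nd.
  apply: (blocked j psi upsi).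
  exact: (box_star_Neg_of_not_dia_star (climb_cpoint j) (cpoint_kform Hu upsi) nd).
exists u; split=> [|uB|w Ruw nwB]; first exact: (climb_u 0).
  by apply: (cpoint_contra normL Hu uB); apply: uG; left.
have [_ Hw] := Rstar_cpoint Ruw.
apply/(Rstar_char normL Hpt Hw Hu) => psi upsi; apply: NNPP => nd.
have kpsi := cpoint_kform Hu upsi.
have esc : escape (pickle psi) (climb (pickle psi)) w.
  by rewrite /escape enum_formK; split=> //; apply: Rstar_trans (climb_u _) Ruw.
have [_ _ _] := escape_fromP (ex_intro _ w esc); rewrite enum_formK => nd'.
apply: (blocked _ psi upsi).
exact: (box_star_Neg_of_not_dia_star (climb_cpoint (pickle psi).+1) kpsi nd').
Qed.

End MaximalRefuter.

Section Reduction.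
Variables (n : nat) (L : logic n) (k m h : nat) (Bs : nat -> form n) (phi : form n).
Hypotheses (normL : normal L) (Hpt : pretrans_at L m) (kphi : kform k phi).
Hypothesis Bs_depth : forall i, i <= h ->
  kform k (Bs i) /\ forall x, cpoint L k x -> (x (Bs i) <-> depth_le L k x i).

Definition reduct_at i := Imp (box_star m (Imp (box_star m phi) (Bs i))) (Bs i).

Definition reduct := bigAnd [seq reduct_at i | i <- iota 0 h.+1].

Lemma kform_guard i : i <= h -> kform k (Imp (box_star m phi) (Bs i)).
Proof. by move=> ih; rewrite kform_Imp kform_box_star // (Bs_depth ih).1. Qed.

Lemma kform_reduct_at i : i <= h -> kform k (reduct_at i).
Proof.
move=> ih; rewrite /reduct_at kform_Imp kform_box_star ?kform_guard //.
exact: (Bs_depth ih).1.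
Qed.

Lemma kform_reduct : kform k reduct.
Proof.
rewrite kform_bigAnd; apply/allP => _ /mapP [i + ->].
by rewrite mem_iota add0n ltnS => /andP [_ ih]; apply: kform_reduct_at.
Qed.

Lemma cpoint_reduct x : cpoint L k x ->
  x reduct <-> forall i, i <= h -> x (reduct_at i).
Proof.
move=> Hx; have kr : all (kform k) [seq reduct_at i | i <- iota 0 h.+1].
  by rewrite -kform_bigAnd kform_reduct.
rewrite (cpoint_bigAnd normL Hx kr).
split=> [xr i ih|xr _ /mapP [i + ->]]; last by rewrite mem_iota add0n ltnS => /andP [_ /xr].
by apply: xr; apply: map_f; rewrite mem_iota add0n ltnS.
Qed.

Lemma reduct_of_Lh_succ : Lh L m h.+1 phi -> L reduct.
Proof.
move=> Lphi; apply: NNPP => nr.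
have [x Hx [_ nxr]] := cpoint_countermodel normL normL (fun a La => La) kform_reduct nr.
have [i ih nxi] : exists2 i, i <= h & ~ x (reduct_at i).
  apply: NNPP => nex; apply/nxr/(cpoint_reduct Hx) => i ih.
  by apply: NNPP => nxi; apply: nex; exists i.
have [kB Bdepth] := Bs_depth ih.
have [kbphi kimp] := (kform_box_star m kphi, kform_guard ih).
move: nxi; rewrite (cpoint_Imp normL Hx (kform_box_star m kimp) kB) => nxi.
have [xbox nxB] : x (box_star m (Imp (box_star m phi) (Bs i))) /\ ~ x (Bs i).
  by split=> [|xB]; apply: NNPP => nx; apply: nxi.
have [u [Rxu nuB umax]] := exists_maximal_refuter normL Hpt kB Hx nxB.
have [_ Hu] := Rstar_cpoint Rxu.
have ui : depth_le L k u i.+1.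
  apply: depth_le_succ Hu _ => w Ruw nRwu; have [_ Hw] := Rstar_cpoint Ruw.
  by apply/(Bdepth w Hw); apply: NNPP => nwB; apply/nRwu/umax.
have uphi : u (box_star m phi).
  apply/(cpoint_box_star normL Hpt Hu kphi) => w Ruw; have [_ Hw] := Rstar_cpoint Ruw.
  apply: (cpoint_Lh_depth_le normL Hpt h.+1 Hw).2 _ _ kphi Lphi.
  by apply: depth_le_Rstar Ruw _; apply: depth_le_mono ui; rewrite ltnS.
have := (cpoint_box_star normL Hpt Hx kimp).1 xbox u Rxu.
by rewrite (cpoint_Imp normL Hu kbphi kB) => /(_ uphi).
Qed.

Lemma Lh_succ_of_reduct : L reduct -> Lh L m h.+1 phi.
Proof.
move=> Lr; apply: NNPP => nphi.
have [x Hx [xLh nxphi]] := cpoint_countermodel normL (ext_normal L (Bform n m h.+1))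
                             (@ext_incl _ L _) kphi nphi.
have [i ih [xi nxi]] := depth_exact Hx ((cpoint_Lh_depth_le normL Hpt h.+1 Hx).1 xLh).
rewrite ltnS in ih; have [kB Bdepth] := Bs_depth ih.
have [kbphi kimp] := (kform_box_star m kphi, kform_guard ih).
have := (cpoint_reduct Hx).1 (cpoint_thm normL Hx kform_reduct Lr) i ih.
rewrite (cpoint_Imp normL Hx (kform_box_star m kimp) kB) (Bdepth x Hx) => /(_ _)/nxi; apply.
apply/(cpoint_box_star normL Hpt Hx kimp) => v Rxv; have [_ Hv] := Rstar_cpoint Rxv.
rewrite (cpoint_Imp normL Hv kbphi kB) (Bdepth v Hv) => vphi.
case: (classic (Rstar L k v x)) => [Rvx|nRvx]; last exact: depth_le_strict Rxv nRvx xi.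
by case: nxphi; apply: (cpoint_box_star normL Hpt Hv kphi).1 vphi x Rvx.
Qed.

End Reduction.

Theorem theorem4p4 (n : nat) (L : logic n) (m h k : nat) :
  normal L -> least_pretrans L m ->
  ktabular (Lh L m h) k ->
  (forall i, i <= h ->
     exists Bik : form n, kform k Bik /\
       forall x, cpoint L k x -> (x Bik <-> depth_le L k x i))
  /\
  (forall Bs : nat -> form n,
     (forall i, i <= h -> kform k (Bs i) /\
        forall x, cpoint L k x -> (x (Bs i) <-> depth_le L k x i)) ->
     forall phi : form n, kform k phi ->
       (Lh L m h.+1 phi <->
        L (bigAnd [seq Imp (box_star m (Imp (box_star m phi) (Bs i))) (Bs i)
                  | i <- iota 0 h.+1]))).
Proof.
move=> normL [Hpt _] [reps [kreps reps_cover]]; split=> [i ih|Bs Bs_depth phi kphi].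
  exists (depth_form L k m h reps i); split=> [|x Hx].
    exact: (kform_depth_form L m h kreps).
  exact: (cpoint_depth_form normL Hpt kreps reps_cover ih Hx).
split; first exact: (reduct_of_Lh_succ normL Hpt kphi Bs_depth).
exact: (Lh_succ_of_reduct normL Hpt kphi Bs_depth).
Qed.
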